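(* Let $(X,G)$ be a minimal topological dynamical system. If $\pi_{eq}$ is almost $N$ to one for some $N\in\mathbb N\cup\{\infty\}$, then $|E|\ge N$ for every $E\in\mathcal X$.
   Context: $G$ is an infinite countable discrete group; a tds $(X,G)$ is a compact metric space with a $G$-action by homeomorphisms; minimal means no proper nonempty closed invariant subset. $\pi_{eq}:X\to X_{eq}$ is the factor map onto the maximal equicontinuous factor; it is almost $N$ to one if $\{y\in X_{eq}:|\pi_{eq}^{-1}(y)|=N\}$ is a residual subset of $X_{eq}$. $2^X$ is the space of nonempty closed subsets of $X$ with the Hausdorff metric, and $\mathcal X=\overline{\{\pi_{eq}^{-1}(y):y\in X_{eq}\}}\subset 2^X$. *)

From HB Require Import structures.
From mathcomp Require Import all_boot all_order all_algebra.
From mathcomp Require Import monoid.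
From mathcomp Require Import all_classical all_reals.
From mathcomp Require Import topology normedtype.
Set Implicit Arguments. Unset Strict Implicit. Unset Printing Implicit Defensive.
Import Order.TTheory GRing.Theory Num.Theory.
Local Open Scope classical_set_scope.
Local Open Scope ring_scope.

Inductive natinf := Fin of nat | Inf.

Definition card_is {T} (A : set T) (N : natinf) : Prop :=
  match N with Fin n => (A #= `I_n)%card | Inf => infinite_set A end.
Definition card_geq {T} (A : set T) (N : natinf) : Prop :=
  match N with Fin n => (`I_n #<= A)%card | Inf => infinite_set A end.

(** A G-action on X by homeomorphisms: a (left) group action by continuous maps
    (each act g is then a homeomorphism with inverse act g^-1). *)
Definition is_action (G : groupType) (X : topologicalType) (act : G -> X -> X) :=
  (forall g, continuous (act g)) /\
  (forall x, act 1%g x = x) /\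
  (forall g h x, act (g * h)%g x = act g (act h x)).

Definition tds {R : realType} (G : groupType) (X : metricType R)
    (act : G -> X -> X) := compact [set: X] /\ is_action act.

Definition invariant (G : groupType) (X : Type) (act : G -> X -> X) (A : set X) :=
  forall g x, A x -> A (act g x).

Definition minimal (G : groupType) (X : topologicalType) (act : G -> X -> X) :=
  forall A : set X, A !=set0 -> closed A -> invariant act A -> A = [set: X].

Definition equicontinuous_sys {R : realType} (G : groupType) (Y : metricType R)
    (act : G -> Y -> Y) :=
  forall e : R, 0 < e -> exists2 d : R, 0 < d &
    forall y y' : Y, mdist y y' < d -> forall g, mdist (act g y) (act g y') < e.

Definition factor_map (G : groupType) (X Y : topologicalType)
    (actX : G -> X -> X) (actY : G -> Y -> Y) (p : X -> Y) :=
  continuous p /\ (forall y, exists x, p x = y) /\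
  (forall g x, p (actX g x) = actY g (p x)).

Definition max_eq_factor {R : realType} (G : groupType) (X Y : metricType R)
    (actX : G -> X -> X) (actY : G -> Y -> Y) (p : X -> Y) :=
  tds actY /\ equicontinuous_sys actY /\ factor_map actX actY p /\
  forall (Z : metricType R) (actZ : G -> Z -> Z) (q : X -> Z),
    tds actZ -> equicontinuous_sys actZ -> factor_map actX actZ q ->
    exists f : Y -> Z, factor_map actY actZ f /\ q = f \o p.

Definition residual (T : topologicalType) (S : set T) :=
  exists U : nat -> set T, (forall n, open (U n) /\ dense (U n)) /\
    \bigcap_n U n `<=` S.

Definition almost_N_to_one (X : Type) (T : topologicalType) (p : X -> T)
  (N : natinf) := residual [set y : T | card_is (p @^-1` [set y]) N].

Definition dist_pt_set {R : realType} (X : metricType R) (x : X) (B : set X) : R :=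
  inf [set mdist x b | b in B].
Definition hausdorff_dist {R : realType} (X : metricType R) (A B : set X) : R :=
  Num.max (sup [set dist_pt_set a B | a in A]) (sup [set dist_pt_set b A | b in B]).

Definition hyper {R : realType} (X : metricType R) (E : set X) :=
  E !=set0 /\ closed E.

Definition hyper_closure {R : realType} (X : metricType R) (S : set (set X)) :
  set (set X) :=
  [set E | hyper E /\ forall e : R, 0 < e ->
     exists2 F, S F & hausdorff_dist E F < e].

Definition fibre_closure {R : realType} (X : metricType R) (Y : Type) (p : X -> Y) :=
  hyper_closure [set p @^-1` [set y] | y in [set: Y]].

From HB Require Import structures.
From mathcomp Require Import all_boot all_order all_algebra.
From mathcomp Require Import monoid.
From mathcomp Require Import all_classical all_reals.
From mathcomp Require Import topology normedtype.
From mathcomp Require Import interval_inference lra.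
Import Order.TTheory GRing.Theory Num.Theory.
Import metricType_numDomainType.
Local Open Scope classical_set_scope.
Local Open Scope ring_scope.

(* Suppose some E in the fibre closure had fewer than N points; then E is
   finite.  For each k, the set W_k of points y whose fibre is covered by |E|
   open sets of diameter < 1/(k+1) is open, by upper semicontinuity of the
   fibres, and dense: approximate E by a fibre in the Hausdorff metric and, by
   minimality, move that fibre by a group element over any prescribed open set;
   since E is finite, a single group element moves small balls around the
   points of E to small sets.  By Baire, some fibre with exactly N points lies
   over all W_k, and a pigeonhole argument shows it has at most |E| points. *)

Lemma compact_nested_closed (T : topologicalType) (B : nat -> set T) :
  compact [set: T] -> (forall n, closed (B n)) -> (forall n, B n !=set0) ->
  (forall n, B n.+1 `<=` B n) -> \bigcap_n B n !=set0.
Proof.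
move=> cT Bcl Bne Bdecr.
have [c Bc] := choice Bne.
have Bmono n k : (n <= k)%N -> B k `<=` B n.
  move=> /subnK <-; elim: (k - n)%N => // i IH.
  exact: subset_trans (Bdecr _) IH.
have [l [_ cl]] := cT (c @ \oo) _ filterT.
exists l => n _; apply: Bcl => N lN; apply: cl lN.
by exists n => // k /= nk; exact: Bmono nk _ (Bc k).
Qed.

Lemma fibre_subset_nbhs {T U : topologicalType}
    {p : T -> U} {O : set T} {y : U} :
  compact [set: T] -> hausdorff_space U -> continuous p -> open O ->
  p @^-1` [set y] `<=` O -> \forall y' \near y, p @^-1` [set y'] `<=` O.
Proof.
move=> cT hU cp oO yO.
have cC : compact (p @` ~` O).
  apply: continuous_compact; first exact: continuous_subspaceT.
  by rewrite -[~` O]setTI; apply: compact_closedI => //; exact: open_closedC.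
have : open_nbhs y (~` (p @` ~` O)).
  split; first by apply: closed_openC; exact: compact_closed cC.
  by move=> [x /= Ox pxy]; apply/Ox/yO; rewrite /= pxy.
move/open_nbhs_nbhs; apply: filterS => y' y'O x /= pxy'.
by apply: contrapT => Ox; apply: y'O; exists x.
Qed.

Section metric.
Context {R : realType} {X : metricType R}.

Lemma nbhs_mball (a : X) (r : R) : 0 < r -> nbhs a [set w | mdist a w < r].
Proof. by move=> r0; rewrite -filter_from_mdist_nbhs; exists r. Qed.

Lemma open_mball (a : X) (r : R) : open [set w | mdist a w < r].
Proof.
rewrite openE => w /= aw; rewrite /interior /= -filter_from_mdist_nbhs.
exists (r - mdist a w); first by rewrite subr_gt0.
by move=> z /= wz; have := metric_triangle a w z; lra.
Qed.

Lemma closed_mball (a : X) (r : R) : closed [set w | mdist a w <= r].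
Proof.
move=> w clw; apply/ler_addgt0Pr => e e0.
have [z [/= az wz]] := clw _ (nbhs_mball w _ e0).
by have := metric_triangle a z w; rewrite (metric_sym z w); lra.
Qed.

Lemma compact_mdist_bounded (x0 : X) :
  compact [set: X] -> exists M : R, forall a, mdist x0 a <= M.
Proof.
move=> /compact_near_coveringP cX.
have : \forall M \near +oo, [set: X] `<=` [set a | mdist x0 a <= M].
  apply: (cX _ _ (fun M a => mdist x0 a <= M)) => a _.
  exists ([set w | mdist a w < 1], [set M | mdist x0 a + 1 < M]).
    by split; [exact: nbhs_mball | exact/nbhs_pinfty_gt/num_real].
  case=> w M [/= aw aM]; have := metric_triangle x0 a w; lra.
by case/filter_ex => M HM; exists M => a; exact: HM.
Qed.

Lemma hausdorff_distC (A B : set X) : hausdorff_dist A B = hausdorff_dist B A.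
Proof. by rewrite /hausdorff_dist maxC. Qed.

Lemma hausdorff_dist_lt_mdist {A B : set X} {e : R} {a : X} :
  compact [set: X] -> B !=set0 -> hausdorff_dist A B < e -> A a ->
  exists2 b, B b & mdist a b < e.
Proof.
move=> cX [b0 Bb0] ABe Aa.
have [M HM] := compact_mdist_bounded b0 cX.
have B_lbound a' : has_lbound [set mdist a' b | b in B].
  by exists 0 => _ [b _ <-]; exact: mdist_ge0.
have a_le_sup : dist_pt_set a B <= sup [set dist_pt_set a' B | a' in A].
  apply: ub_le_sup; last by exists a.
  exists M => _ [a' _ <-]; apply: (le_trans _ (HM a')).
  by rewrite metric_sym; apply: ge_inf => //; exists b0.
have : dist_pt_set a B < e.
  apply: le_lt_trans a_le_sup _.
  by move: ABe; rewrite /hausdorff_dist gt_max => /andP[].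
by case/inf_lt => [|_ [b Bb <-]]; [exists (mdist a b0), b0 | exists b].
Qed.

Lemma open_dense_closed_mball (V : set X) (c : X) (r : R) :
  open V -> dense V -> 0 < r ->
  exists c' (r' : R), 0 < r' /\
    [set w | mdist c' w <= r'] `<=` [set w | mdist c w <= r] `&` V.
Proof.
move=> oV dV r0.
have [z [/= cz Vz]] : [set w | mdist c w < r] `&` V !=set0.
  by apply: dV; [exists c; rewrite /= mdistxx | exact: open_mball].
have : nbhs z ([set w | mdist c w < r] `&` V).
  by apply: open_nbhs_nbhs; split; [exact: openI (open_mball c r) oV|].
rewrite -filter_from_mdist_nbhs => -[d d0 Hd].
exists z, (d / 2); split; first by rewrite divr_gt0.
move=> w /= zw; have /Hd[/= cw Vw] : mdist z w < d by lra.
by split => //=; rewrite ltW.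
Qed.

Lemma compact_Baire (V : nat -> set X) (x0 : X) :
  compact [set: X] -> (forall n, open (V n) /\ dense (V n)) ->
  \bigcap_n V n !=set0.
Proof.
move=> cX oV.
pose C (cr : X * {posnum R}) := [set w | mdist cr.1 w <= cr.2%:num].
have step (ncr : nat * (X * {posnum R})) :
    exists cr, C cr `<=` C ncr.2 `&` V ncr.1.
  case: ncr => n [c r]; have [oVn dVn] := oV n.
  have [c' [r' [r'0 sub]]] := open_dense_closed_mball _ c _ oVn dVn (gt0 r).
  by exists (c', PosNum r'0).
have [next Hnext] := choice step.
pose fix s n := if n is k.+1 then next (k, s k) else (x0, PosNum ltr01).
have [l Cl] : \bigcap_n C (s n.+1) !=set0.
  apply: compact_nested_closed => // [n|n|n w /(Hnext (n.+1, _)) []//].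
  - exact: closed_mball.
  - by exists (s n.+1).1; rewrite /C /= mdistxx.
by exists l => n _; have [] := Hnext (n, s n) _ (Cl n I).
Qed.

End metric.

Lemma finite_continuous_mdist {R : realType} {X Y : metricType R}
    {f : X -> Y} {S : set X} {e : R} :
  finite_set S -> continuous f -> 0 < e ->
  exists2 r : R, 0 < r &
    forall a u, S a -> mdist a u < r -> mdist (f a) (f u) < e.
Proof.
move=> /finite_seqP[s ->] cf e0.
have /choice[r Hr] : forall a, exists r : R,
    0 < r /\ forall u, mdist a u < r -> mdist (f a) (f u) < e.
  move=> a; have := cf a _ (nbhs_mball (f a) _ e0).
  by rewrite -filter_from_mdist_nbhs => -[r r0 Hr]; exists r.
exists (\big[Order.min/1]_(a <- s) r a).
  by apply: lt_bigmin => // a _; exact: (Hr a).1.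
move=> a u /= sa au; apply: (Hr a).2; apply: lt_le_trans au _.
exact: ge_bigmin_seq.
Qed.

Lemma card_leIP {T} (A : set T) n :
  (`I_n #<= A)%card <-> exists p : 'I_n -> T, injective p /\ forall i, A (p i).
Proof.
split=> [/pcard_surjP[g gsurj]|[p [pinj Ap]]].
  have /fin_all_exists[p Hp] : forall i : 'I_n, exists x, A x /\ g x = i.
    by move=> i; have [x Ax gx] := gsurj _ (ltn_ord i); exists x.
  exists p; split=> [i j pij|i]; last exact: (Hp i).1.
  by apply: ord_inj; rewrite -(Hp i).2 -(Hp j).2 pij.
have := @card_II n; rewrite card_eq_le => /andP[le_I _].
have := @inj_card_eq _ _ [set: 'I_n] _ (in2W pinj).
rewrite card_eq_le => /andP[_ le_p].
apply: card_le_trans le_I (card_le_trans le_p (subset_card_le _)).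
by move=> _ [i _ <-].
Qed.

Lemma not_card_leII_finite {T} {A : set T} {n} :
  ~ (`I_n #<= A)%card -> finite_set A.
Proof.
move=> nA; apply: contrapT => /infiniteP NA; apply: nA.
exact: card_le_trans (subset_card_le (subsetT _)) NA.
Qed.

Lemma not_card_geq {T} (E : set T) N : ~ card_geq E N ->
  exists n, ~ (`I_n #<= E)%card /\
    forall U (A : set U), card_is A N -> (`I_n #<= A)%card.
Proof.
case: N => [n|] /= nE; first by exists n; split=> // U A /card_eqPle[].
have [m /card_eqPle[Em _]] := (finite_setP E).1 (contrapT nE).
exists m.+1; split=> [Im|U A /infiniteP NA].
  by have := card_le_trans Im Em; rewrite card_le_II ltnn.
exact: card_le_trans (subset_card_le (subsetT _)) NA.
Qed.

Section action.
Context {G : groupType} {T : topologicalType} {act : G -> T -> T}.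
Hypothesis actT : is_action act.

Lemma actK g : cancel (act g) (act g^-1).
Proof. by have [_ [act1 actM]] := actT; move=> x; rewrite -actM mulVg act1. Qed.

Lemma actKV g : cancel (act g^-1) (act g).
Proof. by have [_ [act1 actM]] := actT; move=> x; rewrite -actM mulgV act1. Qed.

Lemma minimal_orbit_meets (x : T) (O : set T) :
  minimal act -> O !=set0 -> open O -> exists g, O (act g x).
Proof.
have [cact [act1 actM]] := actT; move=> minT [z Oz] oO.
have orbit_dense : closure [set act g x | g in [set: G]] = [set: T].
  apply: minT; first by exists x; apply: subset_closure; exists 1%g.
    exact: closed_closure.
  move=> g w clw B /(cact g w) /clw[_ [[h _ <-] /= hB]].
  by exists (act g (act h x)); split=> //; exists (g * h)%g; rewrite ?actM.
have : closure [set act g x | g in [set: G]] z by rewrite orbit_dense.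
by move=> /(_ O (open_nbhs_nbhs (conj oO Oz)))[_ [[g _ <-] Og]]; exists g.
Qed.

End action.

Definition small_cover {R : realType} {X : metricType R} (E A : set X) (r : R) :=
  exists V : X -> set X, [/\ forall a, open (V a),
    forall a u v, E a -> V a u -> V a v -> mdist u v < r &
    A `<=` \bigcup_(a in E) V a].

Lemma small_cover_card_le {R : realType} {X : metricType R} (E A : set X) n :
  (forall k, small_cover E A k.+1%:R^-1) ->
  (`I_n #<= A)%card -> (`I_n #<= E)%card.
Proof.
move=> cover /card_leIP[p [pinj Ap]]; apply/card_leIP.
pose r := \big[Order.min/1]_(ij : 'I_n * 'I_n | ij.1 != ij.2)
  mdist (p ij.1) (p ij.2).
have r0 : 0 < r.
  by apply: lt_bigmin => // -[i j] /= ij; rewrite mdist_gt0 (inj_eq pinj).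
have [k _ /(_ k (leqnn k)) /= kr] := near_infty_natSinv_lt (PosNum r0).
have [V [_ Vsmall Vcover]] := cover k.
have /fin_all_exists[q Hq] : forall i, exists a, E a /\ V a (p i).
  by move=> i; have [a Ea Va] := Vcover _ (Ap i); exists a.
exists q; split=> [i j qij|i]; last exact: (Hq i).1.
apply/eqP; apply: contraT => ij.
have := Vsmall _ _ _ (Hq i).1 (Hq i).2; rewrite qij => /(_ _ (Hq j).2) pij.
have rij : r <= mdist (p i) (p j) by exact: (@bigmin_le_cond _ _ _ 1 (i, j)).
by have := lt_le_trans (lt_trans pij kr) rij; rewrite ltxx.
Qed.

Definition covered_fibres {R : realType} {X Y : metricType R} (p : X -> Y)
    (E : set X) (k : nat) : set Y :=
  [set y | small_cover E (p @^-1` [set y]) k.+1%:R^-1].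

Section minimal_factor.
Context {R : realType} {G : groupType} {X Y : metricType R}
  {act : G -> X -> X} {acty : G -> Y -> Y} {p : X -> Y}.
Hypotheses (cX : compact [set: X]) (actX : is_action act) (actY : is_action acty)
  (minX : minimal act) (pF : factor_map act acty p).
Variable E : set X.

Lemma open_covered_fibres k : open (covered_fibres p E k).
Proof.
have [cp _] := pF.
rewrite openE => y [V [oV Vsmall Vcover]].
have oU : open (\bigcup_(a in E) V a) by apply: bigcup_open => a _; exact: oV.
apply: filterS (fibre_subset_nbhs cX (@metric_hausdorff _ Y) cp oU Vcover).
by move=> y' y'cover; exists V.
Qed.

Hypotheses (finE : finite_set E) (E_fibre : fibre_closure p E).

Lemma dense_covered_fibres k : dense (covered_fibres p E k).
Proof.
have [cp [psurj pact]] := pF.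
have [[[x0 Ex0] _] E_approx] := E_fibre.
move=> O [y0 Oy0] oO.
have oO' : open (p @^-1` O) := open_comp (fun x _ => cp x) oO.
have [g Og] : exists g, (p @^-1` O) (act g x0).
  apply: minimal_orbit_meets => //.
  by have [x px] := psurj y0; exists x; rewrite /= px.
have : nbhs x0 (act g @^-1` (p @^-1` O)).
  exact: actX.1 g x0 _ (open_nbhs_nbhs (conj oO' Og)).
rewrite -filter_from_mdist_nbhs => -[eta eta0 x0_eta].
have k0 : 0 < k.+1%:R^-1 / 2 :> R by rewrite divr_gt0 // invr_gt0 ltr0n.
have [r r0 gE] := finite_continuous_mdist finE (actX.1 g) k0.
pose eps := Num.min eta r.
have eps0 : 0 < eps by rewrite lt_min eta0 r0.
have eps_eta : eps <= eta by rewrite ge_min lexx.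
have eps_r : eps <= r by rewrite ge_min lexx orbT.
have [_ [y _ <-] EF] := E_approx eps eps0.
have Fne : p @^-1` [set y] !=set0 by have [x px] := psurj y; exists x.
have [x /= pxy x0x] := hausdorff_dist_lt_mdist cX Fne EF Ex0.
exists (acty g y); split.
  by rewrite -pxy -pact; apply: x0_eta; exact: lt_le_trans x0x eps_eta.
exists (fun a => act g^-1 @^-1` [set w | mdist a w < eps]); split.
- by move=> a; apply: open_comp => [w _|]; [exact: actX.1 | exact: open_mball].
- move=> a u v Ea /= au av.
  have := gE a _ Ea (lt_le_trans au eps_r).
  have := gE a _ Ea (lt_le_trans av eps_r).
  rewrite !(actKV actX) => gv gu.
  apply: le_lt_trans (metric_triangle u (act g a) v) _.
  by rewrite (metric_sym u) [X in _ < X]splitr ltrD.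
- move=> z /= pz.
  have : p (act g^-1 z) = y by rewrite pact pz (actK actY).
  rewrite hausdorff_distC in EF.
  case/(hausdorff_dist_lt_mdist cX (ex_intro _ x0 Ex0) EF) => a Ea za.
  by exists a => //=; rewrite metric_sym.
Qed.

End minimal_factor.

Theorem lemma3p1 (R : realType) (G : groupType) (X Xeq : metricType R)
    (act : G -> X -> X) (acteq : G -> Xeq -> Xeq) (pieq : X -> Xeq)
    (N : natinf) :
  countable [set: G] -> infinite_set [set: G] ->
  tds act -> minimal act ->
  max_eq_factor act acteq pieq ->
  almost_N_to_one pieq N ->
  forall E : set X, fibre_closure pieq E -> card_geq E N.
Proof.
move=> _ _ [cX actX] minX [[cY actY] [_ [pF _]]] [U [oU Ucard]] E E_fibre.
have [[[x0 _] _] _] := E_fibre.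
apply: contrapT => /not_card_geq[n [nE nA]].
have finE := not_card_leII_finite nE.
have [y Wy] : \bigcap_k (U k `&` covered_fibres pieq E k) !=set0.
  apply: (compact_Baire _ (pieq x0) cY) => k; have [oUk dUk] := oU k.
  split; first exact: openI oUk (open_covered_fibres cX pF E k).
  apply: denseI oUk dUk _.
  exact: dense_covered_fibres cX actX actY minX pF E finE E_fibre k.
apply/nE/(small_cover_card_le E (pieq @^-1` [set y])) => [k|].
  by have [] := Wy k I.
by apply/nA/Ucard => k _; have [] := Wy k I.
Qed.
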